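(* Let $n$ be a positive integer. Let $V_n\subseteq T_n$ be the set of triples $(A,B,C)\in T_n$ such that $C$ has at least one point strictly below the horizontal axis and either $B$ ends with an up step or $B$ is empty. Let $D_n^-\subseteq D_n$ be the set of pairs $(H,X)\in D_n$ in which $X$ is strictly below the horizontal axis. Define $t:V_n\to D_n^-$ as follows: for $(A,B,C)\in V_n$, let $K$ be the leftmost point of $C$ of minimal height, let $K$ cut $C$ into a left part $C_1$ and a right part $C_2$, and set $t(A,B,C)=(H,X)$, where $H$ is the concatenation of $C_1$, $A$, $B$, $C_2$ (in this order) and $X$ is the point of $H$ where $A$ ends and $B$ begins. Then $t$ is a bijection from $V_n$ onto $D_n^-$.
   Context: A lattice path here is a finite (possibly empty) sequence of steps, each an up step $(1,1)$ or a down step $(1,-1)$, drawn as a polygonal line from a given starting lattice point; its lattice points are its starting point and the endpoints of its steps; the height of a point is its vertical coordinate. $T_n$ is the set of ordered triples $(A,B,C)$ of lattice paths such that for some nonnegative integers $i,j,k$ with $i+j+k=n$, $A$ has $i$ up and $i$ down steps, $B$ has $j$ up and $j$ down steps, and $C$ has $k$ up and $k$ down steps; each of $A,B,C$ is regarded as drawn starting (and hence ending) on the horizontal axis, and statements about heights of points of $C$ or of $C$ being above/below the axis refer to this drawing. $D_n$ is the set of pairs $(H,X)$ where $H$ is a lattice path with $n$ up steps and $n$ down steps drawn from $(0,0)$ to $(2n,0)$ and $X$ is one of the $2n+1$ lattice points of $H$. Concatenation of paths means drawing them successively, each starting at the endpoint of the preceding one, the first starting at $(0,0)$. *)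

From mathcomp Require Import all_boot all_order all_algebra.
Set Implicit Arguments. Unset Strict Implicit. Unset Printing Implicit Defensive.
Import Order.TTheory GRing.Theory Num.Theory.
Local Open Scope ring_scope.

(* A lattice path is a sequence of steps: true = up step (1,1), false = down step (1,-1). *)
Definition lpath := seq bool.

Definition ht (s : lpath) : int := (count id s)%:Z - (count negb s)%:Z.

Definition pt_ht (s : lpath) (i : nat) : int := ht (take i s).

Definition balanced (s : lpath) : bool := count id s == count negb s.

(* T_n : triples (A,B,C) with i,j,k up/down steps, i+j+k = n *)
Definition inT (n : nat) (v : lpath * lpath * lpath) : bool :=
  let: (A, B, C) := v in
  [&& balanced A, balanced B, balanced C & (size A + size B + size C == 2 * n)%N].

Definition has_below (C : lpath) : bool :=
  has (fun i => pt_ht C i < 0) (iota 0 (size C).+1).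

Definition inV (n : nat) (v : lpath * lpath * lpath) : bool :=
  let: (A, B, C) := v in
  [&& inT n v, has_below C & ((B == [::]) || last false B)].

(* D_n : pairs (H, x), H a path with n up and n down steps, x the index of
   one of its 2n+1 lattice points (the point after x steps). *)
Definition inD (n : nat) (d : lpath * nat) : bool :=
  let: (H, x) := d in [&& balanced H, size H == (2 * n)%N & (x <= 2 * n)%N].

Definition inDminus (n : nat) (d : lpath * nat) : bool :=
  let: (H, x) := d in inD n d && (pt_ht H x < 0).

Definition min_ht (C : lpath) : int :=
  foldr Num.min 0 [seq pt_ht C i | i <- iota 0 (size C).+1].

Definition kpos (C : lpath) : nat :=
  find (fun i => pt_ht C i == min_ht C) (iota 0 (size C).+1).

Definition tmap (v : lpath * lpath * lpath) : lpath * nat :=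
  let: (A, B, C) := v in
  let k := kpos C in
  (take k C ++ A ++ B ++ drop k C, (k + size A)%N).

From mathcomp Require Import all_boot all_order all_algebra zify.
Set Implicit Arguments. Unset Strict Implicit. Unset Printing Implicit Defensive.
Import Order.TTheory GRing.Theory Num.Theory.
Local Open Scope ring_scope.

(* The cut point K is the leftmost lowest point of C, so the left part C1 stays
   strictly above the level of K before reaching it and the right part C2 never
   goes below it; A returns to that level, and B dips below it only to come back
   with its final up step.  Hence (H, X) determines the cut: K is the first visit
   of H to the (negative) level of X, and the end of B is the first index after X
   from which H never again goes below that level.  Cutting H at these two points
   inverts t. *)

Definition step (b : bool) : int := if b then 1 else -1.

Lemma ht_cat s t : ht (s ++ t) = ht s + ht t.
Proof. by rewrite /ht !count_cat; lia. Qed.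

Lemma ht_rcons s b : ht (rcons s b) = ht s + step b.
Proof. by rewrite -cats1 ht_cat; case: b. Qed.

Lemma balancedE s : balanced s = (ht s == 0).
Proof. by rewrite /balanced /ht subr_eq0; apply/eqP/eqP; lia. Qed.

Lemma pt_ht0 s : pt_ht s 0 = 0.
Proof. by rewrite /pt_ht take0. Qed.

Lemma pt_ht_oversize s i : (size s <= i)%N -> pt_ht s i = ht s.
Proof. by move=> le_si; rewrite /pt_ht take_oversize. Qed.

Lemma pt_ht_minn s i : pt_ht s (minn i (size s)) = pt_ht s i.
Proof. by rewrite /pt_ht take_min take_size. Qed.

Lemma pt_ht_take s k i : (i <= k)%N -> pt_ht (take k s) i = pt_ht s i.
Proof. by move=> le_ik; rewrite /pt_ht take_takel. Qed.

Lemma pt_ht_drop s j i : pt_ht s (j + i) = pt_ht s j + pt_ht (drop j s) i.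
Proof. by rewrite /pt_ht takeD ht_cat. Qed.

Lemma ht_take_drop s k x : (k <= x)%N ->
  ht (take (x - k) (drop k s)) = pt_ht s x - pt_ht s k.
Proof.
by move=> le_kx; rewrite -{2}(subnKC le_kx) pt_ht_drop [pt_ht s k + _]addrC addrK.
Qed.

Lemma pt_ht_catl s t i : (i <= size s)%N -> pt_ht (s ++ t) i = pt_ht s i.
Proof. by move=> le_is; rewrite /pt_ht takel_cat. Qed.

Lemma pt_ht_catr s t i : pt_ht (s ++ t) (size s + i) = ht s + pt_ht t i.
Proof. by rewrite pt_ht_drop drop_size_cat // pt_ht_catl // pt_ht_oversize. Qed.

Lemma pt_ht_S s i :
  pt_ht s i.+1 = pt_ht s i + (if (i < size s)%N then step (nth false s i) else 0).
Proof.
case: ltnP => lt_is; first by rewrite /pt_ht (take_nth false lt_is) ht_rcons.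
by rewrite addr0 !pt_ht_oversize // ltnW.
Qed.

Lemma pt_ht_last_up s : last false s -> pt_ht s (size s).-1 = ht s - 1.
Proof.
case/lastP: s => // s b; rewrite last_rcons size_rcons /= => ->.
by rewrite -cats1 pt_ht_catl // pt_ht_oversize // ht_cat addrK.
Qed.

Lemma pt_ht_above_until s h k : h < 0 ->
  (forall i, (i < k)%N -> pt_ht s i != h) -> forall i, (i < k)%N -> h < pt_ht s i.
Proof.
move=> h_neg ne_h; elim=> [|i IH] lt_ik; first by rewrite pt_ht0.
have := pt_ht_S s i; have := IH (ltnW lt_ik); have /eqP := ne_h _ lt_ik.
by case: ltnP => _; [case: nth => /=|]; lia.
Qed.

Lemma find_iota_spec (P : pred nat) m x : (x < m)%N -> P x ->
  [/\ (find P (iota 0 m) <= x)%N, P (find P (iota 0 m)) &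
      forall i, (i < find P (iota 0 m))%N -> ~~ P i].
Proof.
move=> lt_xm Px; have hasP : has P (iota 0 m) by apply/hasP; exists x; rewrite ?mem_iota.
have lt_fm : (find P (iota 0 m) < m)%N by rewrite -[m in (_ < m)%N](size_iota 0) -has_find.
have before i : (i < find P (iota 0 m))%N -> ~~ P i.
  by move=> lt_if; have := before_find 0%N lt_if; rewrite nth_iota ?(ltn_trans lt_if) // => ->.
split=> //; last by have := nth_find 0%N hasP; rewrite nth_iota.
by rewrite leqNgt; apply/negP => /before; rewrite Px.
Qed.

Lemma find_iota_eq (P : pred nat) m k : (k < m)%N -> P k ->
  (forall i, (i < k)%N -> ~~ P i) -> find P (iota 0 m) = k.
Proof.
move=> lt_km Pk before; have [le_fk Pf _] := find_iota_spec lt_km Pk.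
by apply/eqP; rewrite eqn_leq le_fk leqNgt; apply/negP => /before; rewrite Pf.
Qed.

Lemma min_htE C : min_ht C = \big[Num.min/0]_(i <- iota 0 (size C).+1) pt_ht C i.
Proof. by rewrite /min_ht foldrE big_map. Qed.

Lemma min_ht_le C i : min_ht C <= pt_ht C i.
Proof. by rewrite min_htE -pt_ht_minn ge_bigmin_seq // mem_iota ltnS geq_minr. Qed.

Lemma min_ht_attained C : exists2 i, (i <= size C)%N & pt_ht C i = min_ht C.
Proof.
rewrite min_htE.
apply: (big_ind (fun y => exists2 i, (i <= size C)%N & pt_ht C i = y))
  => [|_ _ [i le_i <-] [j le_j <-]|i _].
- by exists 0%N; rewrite ?pt_ht0.
- by rewrite minEle; case: ifP => _; [exists i | exists j].
- by exists (minn i (size C)); rewrite ?geq_minr ?pt_ht_minn.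
Qed.

Lemma min_ht_eq C k : (forall i, pt_ht C k <= pt_ht C i) -> min_ht C = pt_ht C k.
Proof.
move=> lower; have [i _ e_i] := min_ht_attained C.
by rewrite -e_i; apply/le_anti; rewrite lower e_i min_ht_le.
Qed.

Lemma kpos_spec C : [/\ (kpos C <= size C)%N, pt_ht C (kpos C) = min_ht C &
  forall i, (i < kpos C)%N -> min_ht C < pt_ht C i].
Proof.
have [i le_i /eqP e_i] := min_ht_attained C.
have [le_ki /eqP e_k before] :=
  find_iota_spec (P := fun i => pt_ht C i == min_ht C) (m := (size C).+1) le_i e_i.
split=> //; first exact: leq_trans le_ki le_i.
by move=> j /before; rewrite lt_def eq_sym => ->; rewrite min_ht_le.
Qed.

Lemma kpos_eq C k : (k <= size C)%N -> (forall i, pt_ht C k <= pt_ht C i) ->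
  (forall i, (i < k)%N -> pt_ht C k < pt_ht C i) -> kpos C = k.
Proof.
move=> le_k lower above; rewrite /kpos (min_ht_eq lower).
by apply: find_iota_eq => // i /above; rewrite lt_def => /andP[].
Qed.

Definition stays_above (H : lpath) (h : int) (j : nat) : bool :=
  all (fun l => h <= pt_ht H l) (iota j (size H).+1).

Lemma stays_aboveP H h j :
  reflect (forall l, (j <= l)%N -> h <= pt_ht H l) (stays_above H h j).
Proof.
apply: (iffP allP) => [above l le_jl | above l]; last by rewrite mem_iota => /andP[/above].
case: (leqP l (j + size H)) => [le_l | /ltnW lt_l].
  by apply: above; rewrite mem_iota le_jl addnS ltnS.
rewrite pt_ht_oversize ?(leq_trans (leq_addl j _) lt_l) //.
rewrite -(@pt_ht_oversize H (j + size H)) ?leq_addl //.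
by apply: above; rewrite mem_iota leq_addr addnS ltnS /=.
Qed.

Definition first_visit (H : lpath) (x : nat) : nat :=
  find (fun i => pt_ht H i == pt_ht H x) (iota 0 x.+1).

Definition return_idx (H : lpath) (x : nat) : nat :=
  find (fun j => (x <= j)%N && stays_above H (pt_ht H x) j) (iota 0 (size H).+1).

Definition untmap (d : lpath * nat) : lpath * lpath * lpath :=
  let: (H, x) := d in
  let k := first_visit H x in let j := return_idx H x in
  (take (x - k) (drop k H), take (j - x) (drop x H), take k H ++ drop j H).

Section Split.

Variables C1 A B C2 : lpath.
Hypotheses (ht_A : ht A = 0) (ht_B : ht B = 0).
Hypothesis C1_above : forall i, (i < size C1)%N -> ht C1 < pt_ht C1 i.
Hypothesis C2_nonneg : forall t, 0 <= pt_ht C2 t.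
Hypothesis B_up : (B == [::]) || last false B.

Local Notation H := (C1 ++ A ++ B ++ C2).
Local Notation x := (size C1 + size A)%N.

Lemma pt_ht_split_B i : (i <= size B)%N -> pt_ht H (x + i) = ht C1 + pt_ht B i.
Proof. by move=> le_i; rewrite -addnA !pt_ht_catr ht_A add0r pt_ht_catl. Qed.

Lemma pt_ht_split_C2 t : pt_ht H (x + size B + t) = ht C1 + pt_ht C2 t.
Proof. by rewrite -!addnA !pt_ht_catr ht_A ht_B !add0r. Qed.

Lemma pt_ht_split_x : pt_ht H x = ht C1.
Proof. by rewrite -[x]addn0 pt_ht_split_B // pt_ht0 addr0. Qed.

Lemma ht_C1_le_pt_ht i : ht C1 <= pt_ht (C1 ++ C2) i.
Proof.
case: (leqP i (size C1)) => [le_i | /ltnW le_i]; last first.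
  by rewrite -(subnKC le_i) pt_ht_catr lerDl.
rewrite pt_ht_catl //; case: (ltngtP i (size C1)) le_i => // [/C1_above/ltW // | -> _].
by rewrite pt_ht_oversize.
Qed.

Lemma kpos_split : kpos (C1 ++ C2) = size C1.
Proof.
have pt_C1 : pt_ht (C1 ++ C2) (size C1) = ht C1 by rewrite pt_ht_catl ?pt_ht_oversize.
apply: kpos_eq; rewrite ?size_cat ?leq_addr ?pt_C1 //; first exact: ht_C1_le_pt_ht.
by move=> i lt_i; rewrite pt_ht_catl ?C1_above // ltnW.
Qed.

Lemma first_visit_split : first_visit H x = size C1.
Proof.
rewrite /first_visit pt_ht_split_x; apply: find_iota_eq.
- by rewrite ltnS leq_addr.
- by rewrite pt_ht_catl ?pt_ht_oversize.
- by move=> i lt_i; rewrite pt_ht_catl ?(ltnW lt_i) // gt_eqF ?C1_above.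
Qed.

Lemma return_idx_split : return_idx H x = (x + size B)%N.
Proof.
rewrite /return_idx pt_ht_split_x; apply: find_iota_eq.
- by rewrite ltnS !size_cat !addnA leq_addr.
- rewrite leq_addr; apply/stays_aboveP => l le_l.
  by rewrite -(subnKC le_l) pt_ht_split_C2 lerDl.
- move=> i lt_i; apply/negP => /andP[le_xi /stays_aboveP above].
  have nil_B : B != [::] by apply: contraTneq lt_i => ->; rewrite addn0 -leqNgt.
  have last_B : last false B by move: B_up; rewrite (negPf nil_B).
  have le_iB : (i <= x + (size B).-1)%N.
    by move: lt_i; rewrite -(prednK (_ : 0 < size B)%N) ?lt0n ?size_eq0 // addnS ltnS.
  have := above _ le_iB; rewrite pt_ht_split_B ?leq_pred // pt_ht_last_up // ht_B.
  by rewrite add0r; lia.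
Qed.

Lemma tmap_split : tmap (A, B, C1 ++ C2) = (H, x).
Proof. by rewrite /tmap kpos_split take_size_cat // drop_size_cat. Qed.

Lemma untmap_split : untmap (H, x) = (A, B, C1 ++ C2).
Proof.
rewrite /untmap first_visit_split return_idx_split !addKn drop_size_cat //.
rewrite !take_size_cat // (catA C1 A) drop_size_cat ?size_cat // take_size_cat //.
by rewrite catA drop_size_cat ?size_cat.
Qed.

End Split.

Section Forward.

Variables (n : nat) (A B C : lpath).
Hypothesis V_ABC : inV n (A, B, C).

Local Notation C1 := (take (kpos C) C).
Local Notation C2 := (drop (kpos C) C).

Let ht_A : ht A = 0.
Proof. by case/and3P: V_ABC => /and4P[+ _ _ _] _ _; rewrite balancedE => /eqP. Qed.

Let ht_B : ht B = 0.
Proof. by case/and3P: V_ABC => /and4P[_ + _ _] _ _; rewrite balancedE => /eqP. Qed.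

Let B_up : (B == [::]) || last false B.
Proof. by case/and3P: V_ABC. Qed.

Let size_C1 : size C1 = kpos C.
Proof. by case: (kpos_spec C) => le_k _ _; rewrite size_takel. Qed.

Let ht_C1 : ht C1 = min_ht C.
Proof. by case: (kpos_spec C). Qed.

Let C1_above i : (i < size C1)%N -> ht C1 < pt_ht C1 i.
Proof.
case: (kpos_spec C) => _ _ above; rewrite size_C1 ht_C1 => lt_i.
by rewrite pt_ht_take ?above // ltnW.
Qed.

Let C2_nonneg t : 0 <= pt_ht C2 t.
Proof.
have := min_ht_le C (kpos C + t); rewrite pt_ht_drop -ht_C1 /pt_ht.
by rewrite -lerBlDl subrr.
Qed.

Lemma untmap_tmap : untmap (tmap (A, B, C)) = (A, B, C).
Proof.
rewrite -[in tmap _](cat_take_drop (kpos C) C).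
by rewrite tmap_split // untmap_split // cat_take_drop.
Qed.

Lemma tmap_inDminus : inDminus n (tmap (A, B, C)).
Proof.
case/and3P: V_ABC => /and4P[_ _ bal_C /eqP size_ABC] below_C _.
have size_C : size C = (size C1 + size C2)%N by rewrite -size_cat cat_take_drop.
rewrite -[in tmap _](cat_take_drop (kpos C) C) tmap_split //=.
rewrite pt_ht_split_x // ht_C1; apply/andP; split; [apply/and3P; split|].
- by rewrite balancedE !ht_cat ht_A ht_B !add0r -ht_cat cat_take_drop -balancedE.
- by rewrite -size_ABC !size_cat size_C; apply/eqP; lia.
- by rewrite -size_ABC size_C; lia.
- by have [i _ lt_i] := hasP below_C; exact: le_lt_trans (min_ht_le C i) lt_i.
Qed.

End Forward.

Section Backward.

Variables (n : nat) (H : lpath) (x : nat).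
Hypothesis D_Hx : inDminus n (H, x).

Local Notation h := (pt_ht H x).
Local Notation k := (first_visit H x).
Local Notation j := (return_idx H x).
Local Notation C1 := (take k H).
Local Notation A := (take (x - k) (drop k H)).
Local Notation B := (take (j - x) (drop x H)).
Local Notation C2 := (drop j H).

Let ht_H : ht H = 0.
Proof. by case/andP: D_Hx => /and3P[+ _ _] _; rewrite balancedE => /eqP. Qed.

Let size_H : size H = (2 * n)%N.
Proof. by case/andP: D_Hx => /and3P[_ /eqP + _] _. Qed.

Let le_x : (x <= size H)%N.
Proof. by case/andP: D_Hx => /and3P[_ _]; rewrite size_H. Qed.

Let h_neg : h < 0.
Proof. by case/andP: D_Hx. Qed.

Lemma first_visit_spec :
  [/\ (k <= x)%N, pt_ht H k = h & forall i, (i < k)%N -> h < pt_ht H i].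
Proof.
have [le_kx /eqP pt_k before] :=
  find_iota_spec (P := fun i => pt_ht H i == h) (ltnSn x) (eqxx _).
by split=> //; apply: pt_ht_above_until h_neg _ => i /before.
Qed.

Lemma return_idx_spec : [/\ (x <= j <= size H)%N,
  (forall l, (j <= l)%N -> h <= pt_ht H l) & forall i, (x <= i < j)%N -> ~~ stays_above H h i].
Proof.
have above_end : stays_above H h (size H).
  by apply/stays_aboveP => l le_l; rewrite (pt_ht_oversize le_l) ht_H ltW.
have [le_j /andP[le_xj /stays_aboveP above] before] :=
  find_iota_spec (P := fun i => (x <= i)%N && stays_above H h i)
                 (ltnSn (size H)) (introT andP (conj le_x above_end)).
split=> //; first by rewrite le_xj.
by move=> i /andP[le_xi /before]; rewrite le_xi.
Qed.

(* H stays at or above h from j on but not from j.-1, so step j.-1 climbs back to h. *)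
Lemma return_idx_last_step : (x < j)%N -> nth false H j.-1 /\ pt_ht H j = h.
Proof.
case: return_idx_spec => /andP[_ le_j] above before lt_xj.
have j_pos : (0 < j)%N by apply: leq_ltn_trans lt_xj.
have below : pt_ht H j.-1 < h.
  have not_above : ~~ stays_above H h j.-1.
    by apply: before; rewrite -ltnS prednK // lt_xj leqnn.
  rewrite ltNge; apply: contra not_above => le_h; apply/stays_aboveP => l.
  rewrite leq_eqVlt => /orP[/eqP <- // | lt_l].
  by apply: above; rewrite -(prednK j_pos).
have := above j (leqnn j); have := pt_ht_S H j.-1; rewrite prednK //.
by rewrite le_j; move: below; case: nth => /=; lia.
Qed.

Lemma pt_ht_return_idx : pt_ht H j = h.
Proof.
case: return_idx_spec => /andP[le_xj _] _ _.
by case: (ltngtP x j) le_xj => [/return_idx_last_step[] | | <-].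
Qed.

Lemma cat_untmap : H = C1 ++ A ++ B ++ C2.
Proof.
have [le_kx _ _] := first_visit_spec; have [/andP[le_xj _] _ _] := return_idx_spec.
by rewrite catA -takeD subnKC // catA -takeD subnKC // cat_take_drop.
Qed.

Let size_C1 : size C1 = k.
Proof. by case: first_visit_spec => le_kx _ _; rewrite size_takel // (leq_trans le_kx). Qed.

Let x_split : x = (size C1 + size A)%N.
Proof.
case: first_visit_spec => le_kx _ _.
by rewrite size_C1 size_takel ?subnKC // size_drop leq_sub2r.
Qed.

Let ht_C1 : ht C1 = h.
Proof. by case: first_visit_spec. Qed.

Let ht_A : ht A = 0.
Proof. by case: first_visit_spec => le_kx pt_k _; rewrite ht_take_drop // pt_k subrr. Qed.

Let ht_B : ht B = 0.
Proof.
case: return_idx_spec => /andP[le_xj _] _ _.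
by rewrite ht_take_drop // pt_ht_return_idx subrr.
Qed.

Let C1_above i : (i < size C1)%N -> ht C1 < pt_ht C1 i.
Proof.
case: first_visit_spec => _ _ above; rewrite size_C1 ht_C1 => lt_i.
by rewrite pt_ht_take ?above // ltnW.
Qed.

Let C2_nonneg t : 0 <= pt_ht C2 t.
Proof.
case: return_idx_spec => _ above _; have := above (j + t) (leq_addr _ _).
by rewrite pt_ht_drop pt_ht_return_idx lerDl.
Qed.

Let B_up : (B == [::]) || last false B.
Proof.
case: return_idx_spec => /andP[le_xj le_j] _ _.
case: (ltngtP x j) le_xj => [lt_xj | // | <-]; last by rewrite subnn take0.
have size_B : size B = (j - x)%N by rewrite size_takel // size_drop leq_sub2r.
rewrite -nth_last size_B nth_take ?prednK ?subn_gt0 // nth_drop => _.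
have -> : (x + (j - x).-1 = j.-1)%N by lia.
by rewrite (return_idx_last_step lt_xj).1 orbT.
Qed.

Lemma tmap_untmap : tmap (untmap (H, x)) = (H, x).
Proof.
change (tmap (A, B, C1 ++ C2) = (H, x)).
by rewrite tmap_split // -cat_untmap -x_split.
Qed.

Lemma untmap_inV : inV n (untmap (H, x)).
Proof.
have size_split : size H = (size C1 + size A + size B + size C2)%N.
  by rewrite {1}cat_untmap !size_cat !addnA.
have ht_split : ht H = ht C1 + ht A + ht B + ht C2.
  by rewrite {1}cat_untmap !ht_cat !addrA.
change (inV n (A, B, C1 ++ C2)).
apply/and3P; split=> //; [apply/and4P; split|].
- by rewrite balancedE ht_A.
- by rewrite balancedE ht_B.
- by rewrite balancedE ht_cat; move: ht_split; rewrite ht_H ht_A ht_B; lia.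
- by rewrite size_cat -size_H size_split; apply/eqP; lia.
- apply/hasP; exists (size C1); first by rewrite mem_iota ltnS size_cat leq_addr.
  by rewrite pt_ht_catl // pt_ht_oversize // ht_C1.
Qed.

End Backward.

Local Close Scope ring_scope.

Theorem lemma3 (n : nat) (hn : (0 < n)%N) :
  (forall v, inV n v -> inDminus n (tmap v)) /\
  {in inV n &, injective tmap} /\
  (forall d, inDminus n d -> exists2 v, inV n v & tmap v = d).
Proof.
split; [|split].
- by move=> [[A B] C]; exact: tmap_inDminus.
- by apply: (can_in_inj (g := untmap)) => -[[A B] C]; exact: untmap_tmap.
- move=> [H x] D_Hx; exists (untmap (H, x)).
  + exact: untmap_inV D_Hx.
  + exact: tmap_untmap D_Hx.
Qed.
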